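(* Let $(\mathcal{S},\mathcal{A},P,r)$ be an MDP with finite state and action spaces and $r\in[0,1]$, let $\gamma\in(0,1)$, and let $\pi$ be a stationary policy whose gain $\rho^\pi$ is a constant vector. Then $\|\frac1{1-\gamma}\rho^\pi-V^\pi_\gamma\|_\infty\le\|h^\pi\|_{\mathrm{sp}}$ and $\|V^\pi_\gamma\|_{\mathrm{sp}}\le2\|h^\pi\|_{\mathrm{sp}}$.
   Context: $V^\pi_\gamma(s)=\mathbb{E}^\pi_s[\sum_{t\ge0}\gamma^tr(S_t,A_t)]$. Gain $\rho^\pi(s)=\lim_T\frac1T\mathbb{E}^\pi_s[\sum_{t<T}r(S_t,A_t)]$; bias $h^\pi(s)=\mathrm{C}\text{-}\lim_T\mathbb{E}^\pi_s[\sum_{t<T}(r(S_t,A_t)-\rho^\pi(S_t))]$ (Cesàro limit). $\|x\|_{\mathrm{sp}}=\max_sx(s)-\min_sx(s)$. *)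

From HB Require Import structures.
From mathcomp Require Import all_boot all_order all_algebra.
From mathcomp Require Import all_classical all_reals all_analysis.
Set Implicit Arguments. Unset Strict Implicit. Unset Printing Implicit Defensive.
Import Order.TTheory GRing.Theory Num.Theory.
Import numFieldNormedType.Exports.
Local Open Scope ring_scope.

Section MDP.
Variables (R : realType) (S A : finType).
(* Transition kernel P s a s' = P(s' | s, a), reward r s a,
   stationary (possibly randomized) policy pi s a = pi(a | s). *)
Variables (P : S -> A -> S -> R) (r : S -> A -> R) (pi : S -> A -> R).

Definition is_kernel : Prop :=
  (forall s a s', 0 <= P s a s') /\ (forall s a, \sum_(s' : S) P s a s' = 1).
Definition is_policy : Prop :=
  (forall s a, 0 <= pi s a) /\ (forall s, \sum_(a : A) pi s a = 1).

Definition Ppi (x : S -> R) : S -> R :=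
  fun s => \sum_(a : A) pi s a * \sum_(s' : S) P s a s' * x s'.

Definition Ppow (t : nat) (x : S -> R) : S -> R := iter t Ppi x.

Definition rpi : S -> R := fun s => \sum_(a : A) pi s a * r s a.

(* E^pi_s[r(S_t, A_t)] *)
Definition Erew (t : nat) (s : S) : R := Ppow t rpi s.

Definition Vgamma (gamma : R) (s : S) : R :=
  limn (series (fun t => gamma ^+ t * Erew t s)).

Definition gain (s : S) : R :=
  limn (fun T : nat => (T%:R)^-1 * \sum_(t < T) Erew t s).

(* Bias h^pi(s) = C-lim_T E^pi_s[sum_{t<T} (r(S_t,A_t) - rho^pi(S_t))],
   Cesaro limit: lim_N (1/N) sum_{T=1}^{N} x_T. *)
Definition bias_partial (T : nat) (s : S) : R :=
  \sum_(t < T) (Erew t s - Ppow t gain s).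
Definition bias (s : S) : R :=
  limn (fun N : nat => (N%:R)^-1 * \sum_(k < N) bias_partial k.+1 s).
End MDP.

(* span seminorm: max_s x(s) - min_s x(s) = max_{s,s'} (x s - x s') *)
Definition spnorm (R : realType) (S : finType) (x : S -> R) : R :=
  \big[Num.max/0]_(s : S) \big[Num.max/0]_(s' : S) (x s - x s').

Definition infnorm (R : realType) (S : finType) (x : S -> R) : R :=
  \big[Num.max/0]_(s : S) `|x s|.

From HB Require Import structures.
From mathcomp Require Import all_boot all_order all_algebra.
From mathcomp Require Import all_classical all_reals all_analysis.
From mathcomp Require Import ring lra.
Set Implicit Arguments. Unset Strict Implicit. Unset Printing Implicit Defensive.
Import Order.TTheory GRing.Theory Num.Theory.
Import numFieldNormedType.Exports.
Local Open Scope ring_scope.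
Local Open Scope classical_set_scope.

(* Let M be the transition matrix of the chain driven by pi.  An M-invariant
   vector of the form z - M z vanishes, because n (z - M z) = z - M^n z stays
   bounded; so by rank-nullity every vector splits as k + (z - M z) with k
   invariant.  Cesaro averaging shows that k is the gain of r_pi, and applying
   the splitting once more to M z shows that the bias h solves the Poisson
   equation r_pi = rho + h - M h.  Hence V_gamma - rho / (1 - gamma) is the
   discounted sum of the increments M^t h - M^(t+1) h, and Abel summation writes
   each partial sum as a convex combination of the differences h(s) - (M^t h)(s),
   all bounded by the span of h. *)

Lemma disjoint_lker_limg_full (K : fieldType) (vT : vectType K) (f : 'End(vT)) :
  (lker f :&: limg f = 0)%VS -> (lker f + limg f = fullv)%VS.
Proof.
move=> cap0; apply/eqP; rewrite -(dimv_leqif_eq (subvf _)).2 dimv_disjoint_sum //.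
by rewrite -(limg_ker_dim f fullv) capfv addnC.
Qed.

Lemma natmul_bounded_eq0 (R : archiRealFieldType) (u C : R) :
  (forall n : nat, `|n%:R * u| <= C) -> u = 0.
Proof.
move=> bounded; apply/eqP/negPn/negP => u_neq0.
have u_gt0 : 0 < `|u| by rewrite normr_gt0.
have := truncnS_gt (C / `|u|); set n := (Num.truncn _).+1 => lt_n.
have : C < n%:R * `|u| by rewrite -ltr_pdivrMr.
by have := bounded n; rewrite normrM normr_nat; lra.
Qed.

Lemma limn_mean_bounded_remainder (R : realType) (a : R) (b : nat -> R) B :
  (forall n, `|b n| <= B) -> limn (fun n => n%:R^-1 * (n%:R * a + b n)) = a.
Proof.
move=> b_le; apply: (cvg_lim (@Rhausdorff R)); rewrite -cvg_shiftS /=.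
have -> : (fun n => n.+1%:R^-1 * (n.+1%:R * a + b n.+1)) = (fun n => a + b n.+1 * harmonic n).
  apply/funext => n /=; rewrite mulrDr mulrA mulVf ?mul1r ?pnatr_eq0 //; ring.
have bound_cvg : (fun n => B * harmonic n) @ \oo --> (0 : R).
  by rewrite -(mulr0 B); apply: cvgMl_tmp; exact: cvg_harmonic.
have remainder_cvg : (fun n => b n.+1 * harmonic n) @ \oo --> (0 : R).
  apply: (@squeeze_cvgr _ _ _ _ (fun n => - (B * harmonic n)) (fun n => B * harmonic n)).
  - apply: nearW => n /=; rewrite -ler_norml normrM (ger0_norm (harmonic_ge0 n)).
    by apply: ler_wpM2r; [exact: harmonic_ge0 | exact: b_le].
  - by rewrite -oppr0; exact: cvgN.
  - exact: bound_cvg.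
by have := cvgD (cvg_cst a) remainder_cvg; rewrite addr0; exact.
Qed.

Lemma discounted_telescopeE (R : comRingType) (gamma : R) (g : nat -> R) T :
  \sum_(t < T) gamma ^+ t * (g t - g t.+1)
  = gamma ^+ T * (g 0%N - g T) + (1 - gamma) * \sum_(t < T) gamma ^+ t * (g 0%N - g t.+1).
Proof.
elim: T => [|T IH]; first by rewrite !big_ord0 subrr; ring.
by rewrite !big_ord_recr /= IH exprS; ring.
Qed.

Lemma discounted_telescope_le (R : realFieldType) (gamma B : R) (g : nat -> R) T :
  0 <= gamma <= 1 -> (forall t, `|g t - g 0%N| <= B) ->
  `|\sum_(t < T) gamma ^+ t * (g t - g t.+1)| <= B.
Proof.
move=> /andP[gamma_ge0 gamma_le1] g_near; have gammaX_ge0 t := exprn_ge0 t gamma_ge0.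
have weights1 : gamma ^+ T + (1 - gamma) * \sum_(t < T) gamma ^+ t = 1.
  by rewrite -[1 - gamma]opprB mulNr -subrX1; ring.
rewrite discounted_telescopeE; apply: le_trans (ler_normD _ _) _.
apply: (@le_trans _ _ ((gamma ^+ T + (1 - gamma) * \sum_(t < T) gamma ^+ t) * B)); last first.
  by rewrite weights1 mul1r.
rewrite [leRHS]mulrDl; apply: lerD.
  by rewrite normrM ger0_norm // distrC ler_wpM2l.
rewrite -mulrA mulr_suml normrM ger0_norm ?subr_ge0 // ler_wpM2l ?subr_ge0 //.
apply: le_trans (ler_norm_sum _ _ _) _; apply: ler_sum => t _.
by rewrite normrM ger0_norm // distrC ler_wpM2l.
Qed.

Section Seminorms.
Variables (R : realType) (S : finType).
Implicit Types (x : S -> R) (B : R).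

Lemma infnorm_ge x s : `|x s| <= infnorm x.
Proof. exact: (le_bigmax 0 (fun s => `|x s|)). Qed.

Lemma infnorm_le x B : 0 <= B -> (forall s, `|x s| <= B) -> infnorm x <= B.
Proof. by move=> B_ge0 x_le; apply: bigmax_le. Qed.

Lemma spnorm_ge0 x : 0 <= spnorm x.
Proof. exact: bigmax_ge_id. Qed.

Lemma spnorm_ge x s1 s2 : x s1 - x s2 <= spnorm x.
Proof.
apply: le_trans (le_bigmax 0 (fun s => \big[Num.max/0]_s' (x s - x s')) s1).
exact: (le_bigmax 0 (fun s' => x s1 - x s')).
Qed.

Lemma spnorm_le x B : 0 <= B -> (forall s1 s2, x s1 - x s2 <= B) -> spnorm x <= B.
Proof. by move=> B_ge0 x_le; do 2!(apply: bigmax_le => // ? _). Qed.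

End Seminorms.

Section TransitionOperator.
Variables (R : realType) (S : finType) (W : S -> S -> R).
Hypotheses (W_ge0 : forall s s', 0 <= W s s') (W_row1 : forall s, \sum_s' W s s' = 1).

Definition transop (x : S -> R) : S -> R := fun s => \sum_s' W s s' * x s'.
Definition coboundary (z : S -> R) : S -> R := fun s => z s - transop z s.

Local Notation M := transop.

Lemma transopD x y : M (fun s => x s + y s) = fun s => M x s + M y s.
Proof. by apply/funext => s; rewrite -big_split; apply: eq_bigr => s' _; rewrite mulrDr. Qed.

Lemma transopB x y : M (fun s => x s - y s) = fun s => M x s - M y s.
Proof. by apply/funext => s; rewrite -sumrB; apply: eq_bigr => s' _; rewrite mulrBr. Qed.

Lemma transopZ a x : M (fun s => a * x s) = fun s => a * M x s.
Proof. by apply/funext => s; rewrite mulr_sumr; apply: eq_bigr => s' _; rewrite mulrCA. Qed.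

Lemma transop_cst c : M (fun _ => c) = fun _ => c.
Proof. by apply/funext => s; rewrite /transop -mulr_suml W_row1 mul1r. Qed.

Lemma transop_between x lo hi :
  (forall s, lo <= x s <= hi) -> forall s, lo <= M x s <= hi.
Proof.
move=> x_between s; rewrite -[lo]mul1r -[hi]mul1r -(W_row1 s) !mulr_suml.
apply/andP; split; apply: ler_sum => s' _; rewrite ler_wpM2l //; by case/andP: (x_between s').
Qed.

Lemma iter_transopD t x y :
  iter t M (fun s => x s + y s) = fun s => iter t M x s + iter t M y s.
Proof. by elim: t => [|t IH] //=; rewrite IH transopD. Qed.

Lemma iter_transop_fix t k : M k = k -> iter t M k = k.
Proof. by move=> Mk; elim: t => [|t IH] //=; rewrite IH Mk. Qed.

Lemma iter_transop_between t x lo hi :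
  (forall s, lo <= x s <= hi) -> forall s, lo <= iter t M x s <= hi.
Proof. by move=> x_between; elim: t => [|t IH] //=; exact: transop_between. Qed.

Lemma iter_transop_norm_le t x s : `|iter t M x s| <= infnorm x.
Proof.
by rewrite ler_norml; apply: iter_transop_between => s'; rewrite -ler_norml infnorm_ge.
Qed.

Lemma dist_iter_transop_le t x s : `|x s - iter t M x s| <= 2 * infnorm x.
Proof.
apply: le_trans (ler_normB _ _) _.
by have := infnorm_ge x s; have := iter_transop_norm_le t x s; lra.
Qed.

Lemma iter_transop_coboundary t z :
  iter t M (coboundary z) = fun s => iter t M z s - iter t.+1 M z s.
Proof. by elim: t => [|t IH] //=; rewrite IH transopB. Qed.

Lemma sum_iter_transop_coboundary n z s :
  \sum_(t < n) iter t M (coboundary z) s = z s - iter n M z s.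
Proof.
elim: n => [|n IH]; first by rewrite big_ord0 subrr.
by rewrite big_ord_recr /= IH iter_transop_coboundary /=; ring.
Qed.

Lemma sum_iter_transop_decomp n k z s : M k = k ->
  \sum_(t < n) iter t M (fun s => k s + coboundary z s) s
  = n%:R * k s + (z s - iter n M z s).
Proof.
move=> Mk; under eq_bigr do rewrite iter_transopD iter_transop_fix //.
by rewrite big_split /= sum_iter_transop_coboundary sumr_const card_ord mulr_natl.
Qed.

Lemma limn_mean_iter_transop k z s : M k = k ->
  limn (fun n => n%:R^-1 * \sum_(t < n) iter t M (fun s => k s + coboundary z s) s) = k s.
Proof.
move=> Mk; under eq_fun do rewrite sum_iter_transop_decomp //.
apply: (@limn_mean_bounded_remainder _ _ _ (2 * infnorm z)) => n.
exact: dist_iter_transop_le.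
Qed.

Lemma invariant_coboundary_eq0 z : M (coboundary z) = coboundary z ->
  forall s, coboundary z s = 0.
Proof.
move=> Mcz s; apply: (@natmul_bounded_eq0 _ _ (2 * infnorm z)) => n.
have <- : \sum_(t < n) iter t M (coboundary z) s = n%:R * coboundary z s.
  by under eq_bigr do rewrite iter_transop_fix //; rewrite sumr_const card_ord mulr_natl.
by rewrite sum_iter_transop_coboundary dist_iter_transop_le.
Qed.

Definition coboundary_ffun (v : {ffun S -> R^o}) : {ffun S -> R^o} :=
  [ffun s => coboundary v s].

Lemma coboundary_ffun_linear : linear coboundary_ffun.
Proof.
move=> a u v; apply/ffunP => s; rewrite !ffunE /coboundary.
have -> : (a *: u + v : S -> R) = fun s => a * u s + v s.
  by apply/funext => s'; rewrite !ffunE.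
by rewrite transopD transopZ /GRing.scale /=; ring.
Qed.

HB.instance Definition _ :=
  GRing.isLinear.Build R _ _ _ coboundary_ffun coboundary_ffun_linear.

Lemma invariant_coboundary_decomposition (y : S -> R) :
  exists k z : S -> R, M k = k /\ y = fun s => k s + coboundary z s.
Proof.
pose f := linfun coboundary_ffun.
have fE v s : f v s = coboundary v s by rewrite lfunE ffunE.
have ker_inv v : v \in lker f -> M v = v.
  rewrite memv_ker => /eqP/ffunP fv0; apply/funext => s.
  by move: (fv0 s); rewrite fE ffunE => /eqP; rewrite subr_eq0 eq_sym => /eqP.
have cap0 : (lker f :&: limg f = 0)%VS.
  apply/eqP; rewrite -subv0; apply/subvP => v /memv_capP[/ker_inv Mv /memv_imgP[w _ vE]].
  have cwE : coboundary w = v by apply/funext => s; rewrite -fE vE.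
  rewrite memv0; apply/eqP/ffunP => s; rewrite ffunE -cwE.
  by apply: invariant_coboundary_eq0; rewrite cwE.
have /memv_addP[k /ker_inv Mk [v /memv_imgP[z _ ->] yE]] :
    [ffun s => y s : R^o] \in (lker f + limg f)%VS.
  by rewrite disjoint_lker_limg_full // memvf.
exists k, z; split=> //; apply/funext => s.
by move/ffunP/(_ s): yE; rewrite !ffunE -fE.
Qed.

End TransitionOperator.

Section AverageReward.
Variables (R : realType) (S A : finType).
Variables (P : S -> A -> S -> R) (r : S -> A -> R) (pi : S -> A -> R).
Hypotheses (HP : is_kernel P) (Hpi : is_policy pi).

Definition Ppi_mx (s s' : S) : R := \sum_(a : A) pi s a * P s a s'.

Lemma Ppi_mx_ge0 s s' : 0 <= Ppi_mx s s'.
Proof. by apply: sumr_ge0 => a _; rewrite mulr_ge0 ?HP.1 ?Hpi.1. Qed.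

Lemma Ppi_mx_row1 s : \sum_s' Ppi_mx s s' = 1.
Proof.
rewrite exchange_big /= -(Hpi.2 s); apply: eq_bigr => a _.
by rewrite -mulr_sumr HP.2 mulr1.
Qed.

Local Notation M := (transop Ppi_mx).
Local Notation coboundary := (coboundary Ppi_mx).

Lemma Ppi_transop : Ppi P pi = M.
Proof.
apply/funext => x; apply/funext => s; rewrite /Ppi /transop.
under eq_bigr do rewrite mulr_sumr.
rewrite exchange_big /=; apply: eq_bigr => s' _.
by rewrite mulr_suml; apply: eq_bigr => a _; rewrite mulrA.
Qed.

Lemma Ppow_iter_transop : Ppow P pi = fun t => iter t M.
Proof. by rewrite /Ppow Ppi_transop. Qed.

Lemma rpi_between lo hi :
  (forall s a, lo <= r s a <= hi) -> forall s, lo <= rpi r pi s <= hi.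
Proof.
move=> r_between s; rewrite -[lo]mul1r -[hi]mul1r -(Hpi.2 s) !mulr_suml.
apply/andP; split; apply: ler_sum => a _; rewrite ler_wpM2l ?Hpi.1 //;
  by case/andP: (r_between s a).
Qed.

Lemma gain_invariant_part k z : M k = k ->
  rpi r pi = (fun s => k s + coboundary z s) -> gain P r pi = k.
Proof.
move=> Mk rpiE; apply/funext => s.
rewrite /gain /Erew Ppow_iter_transop rpiE.
exact: (limn_mean_iter_transop Ppi_mx_ge0 Ppi_mx_row1).
Qed.

Lemma bias_coboundary_potential c z k z' :
  gain P r pi = (fun _ => c) -> rpi r pi = (fun s => c + coboundary z s) ->
  M k = k -> M z = (fun s => k s + coboundary z' s) ->
  bias P r pi = fun s => z s - k s.
Proof.
move=> gainE rpiE Mk MzE; apply/funext => s.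
have partialE T : bias_partial P r pi T s = z s - iter T M z s.
  rewrite /bias_partial /Erew gainE Ppow_iter_transop rpiE.
  under eq_bigr do rewrite iter_transopD /= addrAC subrr add0r.
  exact: sum_iter_transop_coboundary.
have sumE n : \sum_(j < n) bias_partial P r pi j.+1 s
    = n%:R * (z s - k s) - (z' s - iter n M z' s).
  under eq_bigr do rewrite partialE iterSr MzE.
  rewrite sumrB (sum_iter_transop_decomp _ _ _ Mk) sumr_const card_ord -mulr_natl; ring.
rewrite /bias; under eq_fun do rewrite sumE.
apply: (@limn_mean_bounded_remainder _ _ _ (2 * infnorm z')) => n.
by rewrite normrN (dist_iter_transop_le Ppi_mx_ge0 Ppi_mx_row1).
Qed.

Lemma poisson_equation c : (forall s, gain P r pi s = c) ->
  rpi r pi = fun s => c + coboundary (bias P r pi) s.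
Proof.
move=> gainE.
have [k [z [Mk rpiE]]] := invariant_coboundary_decomposition Ppi_mx_ge0 Ppi_mx_row1 (rpi r pi).
have gain_cst : gain P r pi = fun _ => c by apply/funext.
have kE : k = fun _ => c by rewrite -gain_cst (gain_invariant_part Mk rpiE).
have [k' [z' [Mk' MzE]]] := invariant_coboundary_decomposition Ppi_mx_ge0 Ppi_mx_row1 (M z).
rewrite (bias_coboundary_potential gain_cst _ Mk' MzE); last by rewrite rpiE kE.
by rewrite rpiE kE; apply/funext => s; rewrite /coboundary transopB Mk'; ring.
Qed.

Lemma Erew_between01 : (forall s a, 0 <= r s a <= 1) ->
  forall t s, 0 <= Erew P r pi t s <= 1.
Proof.
move=> r01 t; rewrite /Erew Ppow_iter_transop /=.
exact: (iter_transop_between Ppi_mx_ge0 Ppi_mx_row1 t (rpi_between r01)).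
Qed.

Lemma discounted_reward_cvg gamma : (forall s a, 0 <= r s a <= 1) -> 0 <= gamma < 1 ->
  forall s, cvgn (series (fun t => gamma ^+ t * Erew P r pi t s)).
Proof.
move=> r01 /andP[gamma_ge0 gamma_lt1] s; have gammaX_ge0 t := exprn_ge0 t gamma_ge0.
apply: (@series_le_cvg _ _ (geometric 1 gamma)) => [t|t|t|].
- by case/andP: (Erew_between01 r01 t s) => *; rewrite mulr_ge0.
- by rewrite /geometric /= mul1r.
- by case/andP: (Erew_between01 r01 t s) => *; rewrite /geometric /= mul1r ler_piMr.
- by apply: is_cvg_geometric_series; rewrite ger0_norm.
Qed.

Lemma value_gain_gap_le gamma c h :
  (forall s a, 0 <= r s a <= 1) -> 0 <= gamma < 1 ->
  rpi r pi = (fun s => c + coboundary h s) ->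
  forall s, `|(1 - gamma)^-1 * c - Vgamma P r pi gamma s| <= spnorm h.
Proof.
move=> r01 gamma01 rpiE s; have /andP[gamma_ge0 gamma_lt1] := gamma01.
pose u t := gamma ^+ t * Erew P r pi t s.
have u_cvg : cvgn (series u) := @discounted_reward_cvg gamma r01 gamma01 s.
pose Q T := \sum_(t < T) gamma ^+ t * (iter t M h s - iter t.+1 M h s).
have QE : Q = fun T => series u T - c * series (geometric 1 gamma) T.
  apply/funext => T; rewrite /Q /series /= !big_mkord mulr_sumr -sumrB.
  apply: eq_bigr => t _; rewrite /u /Erew Ppow_iter_transop rpiE iter_transopD.
  by rewrite (iter_transop_fix _ (transop_cst Ppi_mx_row1 c)) iter_transop_coboundary /=; ring.
have Q_cvg : Q @ \oo --> Vgamma P r pi gamma s - c * (1 - gamma)^-1.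
  have := @cvg_geometric_series _ 1 gamma; rewrite mul1r ger0_norm // => /(_ gamma_lt1) geo.
  by rewrite QE; exact: (cvgB u_cvg (cvgMl_tmp (a := c) geo)).
have h_near s' : h s - spnorm h <= h s' <= h s + spnorm h.
  by have := spnorm_ge h s s'; have := spnorm_ge h s' s; move=> ? ?; apply/andP; split; lra.
have Q_le T : `|Q T| <= spnorm h.
  apply: (discounted_telescope_le (g := fun t => iter t M h s)) => [|t /=].
    by rewrite gamma_ge0 ltW.
  have := iter_transop_between Ppi_mx_ge0 Ppi_mx_row1 t h_near s.
  by rewrite ler_norml => /andP[? ?]; apply/andP; split; lra.
rewrite distrC mulrC.
by apply: (ler_cvg_to (cvg_norm Q_cvg) (cvg_cst (spnorm h))); exact: nearW.
Qed.

End AverageReward.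

Theorem lemma25 (R : realType) (S A : finType)
  (P : S -> A -> S -> R) (r : S -> A -> R) (pi : S -> A -> R) (gamma : R) :
  is_kernel P -> is_policy pi ->
  (forall s a, 0 <= r s a <= 1) ->
  0 < gamma < 1 ->
  (exists c : R, forall s, gain P r pi s = c) ->
  infnorm (fun s => (1 - gamma)^-1 * gain P r pi s - Vgamma P r pi gamma s)
    <= spnorm (bias P r pi)
  /\ spnorm (Vgamma P r pi gamma) <= 2 * spnorm (bias P r pi).
Proof.
move=> HP Hpi r01 /andP[gamma_gt0 gamma_lt1] [c gainE].
have gamma01 : 0 <= gamma < 1 by rewrite ltW.
have gap_le := value_gain_gap_le HP Hpi r01 gamma01 (poisson_equation HP Hpi gainE).
split.
- apply: infnorm_le => [|s]; first exact: spnorm_ge0.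
  by rewrite gainE; exact: gap_le.
- apply: spnorm_le => [|s1 s2]; first by rewrite mulr_ge0 ?spnorm_ge0.
  by have := gap_le s1; have := gap_le s2; rewrite !ler_norml; lra.
Qed.
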